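(* Consider an agent with $b$ neighbors in the networked adversarial $K$-armed bandit setting described in the context, whose neighbors play arbitrarily subject to $q^i_j(t)\ge \varepsilon_i/K$ for all neighbors $i$, arms $j$ and times $t$, where $\varepsilon_i\in(0,1]$. Let $$\Theta=\prod_{i=1}^b\left(1-\frac{\varepsilon_i}{K}\right),\qquad \beta=\frac{1}{1-\left(1-\frac1K\right)\Theta}+1.$$ Then for an appropriate choice of the parameters $\eta\in[0,1]$ and $\delta>0$ (depending on $\Theta$, as well as $K$ and $T$), the regret of the agent using the fixed-parameter $\mathrm{EXPN}$ algorithm satisfies $R\in O\left(\sqrt{\beta T\ln K}\right)$.
   Context: Adversarial networked bandit setting: there are $K$ arms and a horizon $T$. At each time $t$ an adversary fixes a reward vector $g(t)\in[0,1]^K$, the same for all agents. The agent has $b$ neighbors; at time $t$ neighbor $i$ selects an arm drawn from a probability distribution $q^i(t)=(q^i_1(t),\dots,q^i_K(t))$ chosen arbitrarily, each agent drawing independently. The agent selects arm $a(t)$ drawn from her distribution $p(t)$, and observes her own reward, the actions and rewards of her neighbors, and their distributions. Define $p'_j(t)=1-(1-p_j(t))\prod_{i=1}^b(1-q^i_j(t))$ and the estimator $\hat g_j(t)=g_j(t)/p'_j(t)$ if some individual among the agent and her neighbors selects arm $j$ at time $t$, and $0$ otherwise. Fixed-parameter $\mathrm{EXPN}$ with exploration parameter $\eta\in[0,1]$ and update parameter $\delta>0$: weights $w_j(1)=1$, $w_j(t+1)=w_j(t)e^{\delta\hat g_j(t)}$, $W_t=\sum_j w_j(t)$, and $p_j(t)=(1-\eta)\frac{w_j(t)}{W_t}+\frac{\eta}{K}$.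 Regret: $R=\mathbb E\left[\sum_t g_{j^\star}(t)-\sum_t g_{a(t)}(t)\right]$ with $j^\star=\arg\max_j\mathbb E[\sum_t g_j(t)]$, expectation over the randomness of the algorithms. *)

From HB Require Import structures.
From mathcomp Require Import all_boot all_order all_algebra.
From mathcomp.reals Require Import reals.
From mathcomp.analysis Require Import sequences exp.

Set Implicit Arguments.
Unset Strict Implicit.
Unset Printing Implicit Defensive.

Import Order.TTheory GRing.Theory Num.Theory.
Local Open Scope ring_scope.

Section NetworkedBandit.
Variable R : realType.
Variables (K b : nat).

(* Joint outcome at one time step: the agent's arm and the arms of her b
   neighbors. *)
Definition outcome := ('I_K * {ffun 'I_b -> 'I_K})%type.

(* Time steps are numbered 0, ..., T-1; the history before time t is the
   sequence of the t previous joint outcomes (all observed by the agent). *)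

Definition selected (o : outcome) (j : 'I_K) : bool :=
  (o.1 == j) || [exists i : 'I_b, o.2 i == j].

Definition expn_dist (eta : R) (w : 'I_K -> R) (j : 'I_K) : R :=
  (1 - eta) * (w j / \sum_(k < K) w k) + eta / K%:R.

Definition pprime (p : 'I_K -> R) (qs : 'I_b -> 'I_K -> R) (j : 'I_K) : R :=
  1 - (1 - p j) * \prod_(i < b) (1 - qs i j).

Definition ghat (gt : 'I_K -> R) (p : 'I_K -> R) (qs : 'I_b -> 'I_K -> R)
    (o : outcome) (j : 'I_K) : R :=
  if selected o j then gt j / pprime p qs j else 0.

Variables (eta delta : R).
Variable g : nat -> 'I_K -> R.
Variable q : seq outcome -> 'I_b -> 'I_K -> R.

Fixpoint expn_weights_aux (pre : seq outcome) (w : 'I_K -> R)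
    (h : seq outcome) : 'I_K -> R :=
  match h with
  | [::] => w
  | o :: h' =>
      let p := expn_dist eta w in
      expn_weights_aux (rcons pre o)
        (fun j => w j * expR (delta * ghat (g (size pre)) p (q pre) o j)) h'
  end.

Definition expn_weights (h : seq outcome) : 'I_K -> R :=
  expn_weights_aux [::] (fun _ => 1) h.

Definition expn_p (h : seq outcome) : 'I_K -> R :=
  expn_dist eta (expn_weights h).

Fixpoint hist_prob_aux (pre : seq outcome) (h : seq outcome) : R :=
  match h with
  | [::] => 1
  | o :: h' =>
      (expn_p pre o.1 * \prod_(i < b) q pre i (o.2 i))
        * hist_prob_aux (rcons pre o) h'
  end.

Definition hist_prob (h : seq outcome) : R := hist_prob_aux [::] h.

Definition expected_reward (T : nat) : R :=
  \sum_(h : T.-tuple outcome)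
    hist_prob h * \sum_(t < T) g t (tnth h t).1.

Definition regret (T : nat) (jstar : 'I_K) : R :=
  \sum_(t < T) g t jstar - expected_reward T.

End NetworkedBandit.

Definition Theta_of (R : realType) (K b : nat) (eps : 'I_b -> R) : R :=
  \prod_(i < b) (1 - eps i / K%:R).

Definition beta_of (R : realType) (K : nat) (Theta : R) : R :=
  (1 - (1 - K%:R^-1) * Theta)^-1 + 1.

From HB Require Import structures.
From mathcomp Require Import all_boot all_order all_algebra.
From mathcomp.reals Require Import reals.
From mathcomp.analysis Require Import sequences exp.
From mathcomp Require Import ring lra.
Import Order.TTheory GRing.Theory Num.Theory.
Local Open Scope ring_scope.

Set Implicit Arguments.
Unset Strict Implicit.
Unset Printing Implicit Defensive.

(* EXPN is exponential weighting driven by the importance-weighted estimator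
   [ghat], which is unbiased and has second moment [g_j^2 / p'_j].  The
   potential argument on [ln W_t], with [expR x <= 1 + x + 2 x^2] on [0, 1/2],
   bounds the regret by [eta T + ln K / delta + 2 delta sum_t E[sum_j p_j / p'_j]].
   Every neighbour plays arm [j] with probability at least [eps_i / K], so
   [p'_j >= 1 - Theta + Theta p_j], and concavity of [x / (1 - Theta + Theta x)]
   bounds [sum_j p_j / p'_j] by [1 / (1 - (1 - 1/K) Theta) <= beta].  Taking
   [delta = sqrt (ln K / (beta T))] and [eta = 4 delta beta] balances the
   three terms; when [4 delta beta >= 1/2] the trivial bound [T] suffices. *)

Section RealInequalities.
Variable R : realType.

Lemma div_affine_le_tangent (a c x u : R) : 0 <= a -> 0 <= c ->
  0 < a + c * x -> 0 < a + c * u ->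
  x / (a + c * x) <= u / (a + c * u) + a * (x - u) / (a + c * u) ^+ 2.
Proof.
move=> a_ge0 c_ge0 Dx_gt0 Du_gt0; rewrite -subr_ge0.
have -> : u / (a + c * u) + a * (x - u) / (a + c * u) ^+ 2 - x / (a + c * x)
    = a * c * (x - u) ^+ 2 / ((a + c * u) ^+ 2 * (a + c * x)).
  by field; rewrite !lt0r_neq0.
by rewrite divr_ge0 // mulr_ge0 ?sqr_ge0 ?mulr_ge0 // ltW.
Qed.

(* Summing the tangent inequalities at the uniform point [1/K] kills the
   first-order terms, because [p] has total mass 1. *)
Lemma sum_div_affine_le (K : nat) (p : 'I_K -> R) (c : R) : (0 < K)%N ->
  0 <= c <= 1 -> \sum_(j < K) p j = 1 -> (forall j, 0 < 1 - c + c * p j) ->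
  \sum_(j < K) p j / (1 - c + c * p j) <= (1 - (1 - K%:R^-1) * c)^-1.
Proof.
move=> K_gt0 /andP[c_ge0 c_le1] sum_p D_gt0.
set u := K%:R^-1 : R.
have Ku : K%:R * u = 1 by rewrite divff // pnatr_eq0 -lt0n.
have u_gt0 : 0 < u by rewrite invr_gt0 ltr0n.
have u_le1 : u <= 1 by rewrite invr_le1 ?unitfE ?pnatr_eq0 -?lt0n // ?ler1n ?ltr0n.
have Du_gt0 : 0 < 1 - c + c * u.
  have : c * (1 - u) <= 1 - u by rewrite ler_piMl ?subr_ge0.
  lra.
have a_ge0 : 0 <= 1 - c by rewrite subr_ge0.
have -> : 1 - (1 - u) * c = 1 - c + c * u by ring.
apply: le_trans (ler_sum _ (fun j _ =>
  div_affine_le_tangent a_ge0 c_ge0 (D_gt0 j) Du_gt0)) _.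
set D := 1 - c + c * u.
rewrite big_split /= sumr_const card_ord -mulr_natl mulrA Ku mul1r.
rewrite -mulr_suml -mulr_sumr sumrB sum_p sumr_const card_ord -mulr_natl Ku.
by rewrite subrr mulr0 mul0r addr0.
Qed.

Lemma expR_le_quadratic (x : R) : 0 <= x <= 1 / 2 -> expR x <= 1 + x + 2 * x ^+ 2.
Proof.
move=> /andP[x_ge0 x_le].
have x_lt1 : 0 < 1 - x by lra.
have expRx_le : expR x <= (1 - x)^-1.
  rewrite -[expR x]invrK lef_pV2 ?posrE ?invr_gt0 ?expR_gt0 // -expRN.
  by have := expR_ge1Dx (- x); rewrite addrC.
apply: le_trans expRx_le _; rewrite -[_^-1]mul1r ler_pdivrMr // -subr_ge0.
have -> : (1 + x + 2 * x ^+ 2) * (1 - x) - 1 = x ^+ 2 * (1 - 2 * x) by ring.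
by rewrite mulr_ge0 ?sqr_ge0 //; lra.
Qed.

Lemma mul_sqrt_div (x y : R) : 0 <= x -> 0 < y ->
  Num.sqrt (x / y) * y = Num.sqrt (x * y).
Proof.
move=> x_ge0 y_gt0.
have -> : x * y = x / y * y ^+ 2 by field; rewrite gt_eqF.
by rewrite [RHS]sqrtrM ?divr_ge0 ?(ltW y_gt0) // sqrtr_sqr gtr0_norm.
Qed.

Lemma div_sqrt_div (x y : R) : 0 < x -> 0 < y ->
  x / Num.sqrt (x / y) = Num.sqrt (x * y).
Proof.
move=> x_gt0 y_gt0.
have s_gt0 : 0 < Num.sqrt (x / y) by rewrite sqrtr_gt0 divr_gt0.
apply: (mulIf (lt0r_neq0 s_gt0)); rewrite divfK ?gt_eqF //.
rewrite -sqrtrM ?mulr_ge0 ?(ltW x_gt0) ?(ltW y_gt0) //.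
have -> : x * y * (x / y) = x ^+ 2 by field; rewrite gt_eqF.
by rewrite sqrtr_sqr gtr0_norm.
Qed.

End RealInequalities.

Lemma sumr_mul_neq (I : finType) (R : pzRingType) (F : I -> R) (j : I) :
  \sum_i F i * (i != j)%:R = \sum_i F i - F j.
Proof.
rewrite [in RHS](bigD1 j) //= [F j + _]addrC addrK (bigD1 j) //= eqxx mulr0 add0r.
by apply: eq_bigr => i ->; rewrite mulr1.
Qed.

Lemma prodr_mul_indicator (I : finType) (R : comPzRingType) (F : I -> R)
    (P : pred I) :
  \prod_i (F i * (P i)%:R) = \prod_i F i * [forall i, P i]%:R.
Proof.
rewrite big_split /=; congr (_ * _).
have [allP | /forallPn[i Pi_false]] := boolP [forall i, P i].
  by apply: big1 => i _; rewrite (forallP allP).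
by rewrite (bigD1 i) //= (negbTE Pi_false) mul0r.
Qed.

Section ExpnProcess.
Variables (R : realType) (K b : nat) (eta delta : R).
Variable g : nat -> 'I_K -> R.
Variable q : seq (outcome K b) -> 'I_b -> 'I_K -> R.

Local Notation history := (seq (outcome K b)).
Local Notation p := (expn_p eta delta g q).
Local Notation w := (expn_weights eta delta g q).

Definition step_prob (H : history) (o : outcome K b) : R :=
  p H o.1 * \prod_(i < b) q H i (o.2 i).

Definition step_expect (H : history) (f : outcome K b -> R) : R :=
  \sum_o step_prob H o * f o.

Lemma eq_step_expect H f1 f2 : f1 =1 f2 -> step_expect H f1 = step_expect H f2.
Proof. by move=> f12; apply: eq_bigr => o _; rewrite f12. Qed.

Lemma step_expectD H f1 f2 :
  step_expect H (fun o => f1 o + f2 o) = step_expect H f1 + step_expect H f2.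
Proof. by rewrite -big_split; apply: eq_bigr => o _; rewrite mulrDr. Qed.

Lemma step_expectB H f1 f2 :
  step_expect H (fun o => f1 o - f2 o) = step_expect H f1 - step_expect H f2.
Proof. by rewrite -sumrB; apply: eq_bigr => o _; rewrite mulrBr. Qed.

Lemma step_expectZ H c f : step_expect H (fun o => c * f o) = c * step_expect H f.
Proof. by rewrite mulr_sumr; apply: eq_bigr => o _; rewrite mulrCA. Qed.

Lemma step_expect_sumr H n (F : 'I_n -> outcome K b -> R) :
  step_expect H (fun o => \sum_(k < n) F k o) = \sum_(k < n) step_expect H (F k).
Proof.
rewrite exchange_big; apply: eq_bigr => o _ /=; exact: mulr_sumr.
Qed.

Fixpoint hist_expect (n : nat) (H : history) (F : history -> R) : R :=
  match n with
  | 0 => F H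
  | n'.+1 => step_expect H (fun o => hist_expect n' (rcons H o) F)
  end.

Lemma sum_hist_prob_expect n H (F : history -> R) :
  \sum_(h : n.-tuple (outcome K b)) hist_prob_aux eta delta g q H h * F (H ++ h)
  = hist_expect n H F.
Proof.
elim: n H => [|n IHn] H /=.
  rewrite (big_pred1 [tuple]) /= ?cats0 ?mul1r // => h.
  by apply/esym/eqP; exact: tuple0.
rewrite (reindex (fun oh : outcome K b * n.-tuple (outcome K b) =>
  [tuple of oh.1 :: oh.2])) /=; last first.
  exists (fun h => (thead h, [tuple of behead h])) => [[o h]|h] _ /=.
    by congr (_, _); apply: val_inj.
  by rewrite [in RHS](tuple_eta h).
rewrite -(pair_big xpredT xpredT (fun o (h : n.-tuple (outcome K b)) =>
  hist_prob_aux eta delta g q H (o :: h) * F (H ++ o :: h))) /=.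
apply: eq_bigr => o _; rewrite -IHn big_distrr /=.
by apply: eq_bigr => h _; rewrite cat_rcons mulrA.
Qed.

Hypothesis K_gt0 : (0 < K)%N.
Hypothesis eta01 : 0 <= eta <= 1.
Hypothesis q_ge0 : forall H i j, 0 <= q H i j.
Hypothesis sum_q : forall H i, \sum_(j < K) q H i j = 1.

Lemma expn_weights_aux_gt0 pre w0 h j : (forall j, 0 < w0 j) ->
  0 < expn_weights_aux eta delta g q pre w0 h j.
Proof.
elim: h pre w0 => [|o h IHh] pre w0 w0_gt0 //=.
by apply: IHh => k; rewrite mulr_gt0 ?expR_gt0.
Qed.

Lemma expn_weights_gt0 H j : 0 < w H j.
Proof. exact: expn_weights_aux_gt0. Qed.

Lemma sum_expn_weights_gt0 H : 0 < \sum_(j < K) w H j.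
Proof.
rewrite (bigD1 (Ordinal K_gt0)) //= ltr_wpDr ?expn_weights_gt0 //.
by rewrite sumr_ge0 // => j _; rewrite ltW ?expn_weights_gt0.
Qed.

Lemma expn_p_ge H j : eta / K%:R <= p H j.
Proof.
rewrite /expn_p /expn_dist lerDr mulr_ge0 ?subr_ge0 ?(andP eta01).2 //.
by rewrite divr_ge0 ?ltW ?expn_weights_gt0 ?sum_expn_weights_gt0.
Qed.

Lemma expn_p_ge0 H j : 0 <= p H j.
Proof.
by apply: le_trans (expn_p_ge H j); rewrite divr_ge0 ?(andP eta01).1.
Qed.

Lemma sum_expn_p H : \sum_(j < K) p H j = 1.
Proof.
rewrite big_split /= -big_distrr /= -mulr_suml divff ?gt_eqF ?sum_expn_weights_gt0 //.
rewrite sumr_const card_ord -[eta / _ *+ K]mulr_natr divfK ?pnatr_eq0 -?lt0n //.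
by rewrite mulr1 subrK.
Qed.

Lemma expn_p_le1 H j : p H j <= 1.
Proof.
rewrite -(sum_expn_p H) (bigD1 j) //= lerDl.
by rewrite sumr_ge0 // => k _; exact: expn_p_ge0.
Qed.

Lemma q_le1 H i j : q H i j <= 1.
Proof. by rewrite -(sum_q H i) (bigD1 j) //= lerDl sumr_ge0. Qed.

Lemma step_prob_ge0 H o : 0 <= step_prob H o.
Proof. by rewrite mulr_ge0 ?expn_p_ge0 ?prodr_ge0. Qed.

Lemma step_expect_agent H (f : 'I_K -> R) :
  step_expect H (fun o => f o.1) = \sum_(a < K) p H a * f a.
Proof.
rewrite /step_expect /step_prob -(pair_big xpredT xpredT (fun a (s : {ffun 'I_b -> 'I_K}) =>
  p H a * \prod_(i < b) q H i (s i) * f a)) /=.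
apply: eq_bigr => a _; rewrite -big_distrl -big_distrr /= -bigA_distr_bigA /=.
by rewrite big1 ?mulr1 // => i _; exact: sum_q.
Qed.

Lemma step_expect_cst H c : step_expect H (fun _ => c) = c.
Proof.
by rewrite (step_expect_agent H (fun _ => c)) -mulr_suml sum_expn_p mul1r.
Qed.

Lemma hist_expect_cst n H c : hist_expect n H (fun _ => c) = c.
Proof.
elim: n H => [|n IHn] H //=.
by rewrite -[RHS](step_expect_cst H c); apply: eq_step_expect => o; exact: IHn.
Qed.

Lemma hist_expectD n H F G :
  hist_expect n H (fun H' => F H' + G H') = hist_expect n H F + hist_expect n H G.
Proof.
elim: n H => [|n IHn] H //=.
by rewrite -step_expectD; apply: eq_step_expect => o; exact: IHn.
Qed.

Lemma hist_expectZ n H F c :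
  hist_expect n H (fun H' => c * F H') = c * hist_expect n H F.
Proof.
elim: n H => [|n IHn] H //=.
by rewrite -step_expectZ; apply: eq_step_expect => o; exact: IHn.
Qed.

Lemma ler_hist_expect n H F G :
  (forall H', size H' = (size H + n)%N -> F H' <= G H') ->
  hist_expect n H F <= hist_expect n H G.
Proof.
elim: n H => [|n IHn] H FG /=; first by apply: FG; rewrite addn0.
apply: ler_sum => o _; rewrite ler_wpM2l ?step_prob_ge0 // IHn // => H' sizeH'.
by apply: FG; rewrite sizeH' size_rcons addSnnS.
Qed.

Lemma eq_hist_expect n H F G :
  (forall H', size H' = (size H + n)%N -> F H' = G H') ->
  hist_expect n H F = hist_expect n H G.
Proof.
by move=> FG; apply/le_anti; rewrite !ler_hist_expect // => H' /FG ->.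
Qed.

Fixpoint hist_sum_aux (phi : history -> outcome K b -> R) (pre h : history) : R :=
  match h with
  | [::] => 0
  | o :: h' => phi pre o + hist_sum_aux phi (rcons pre o) h'
  end.

Definition hist_sum (phi : history -> outcome K b -> R) (H : history) : R :=
  hist_sum_aux phi [::] H.

Lemma hist_sum_rcons phi H o : hist_sum phi (rcons H o) = hist_sum phi H + phi H o.
Proof.
rewrite /hist_sum -[H in phi H]cat0s; elim: H [::] => [|o' H IHH] pre /=.
  by rewrite cats0 add0r addr0.
by rewrite IHH cat_rcons addrA.
Qed.

Lemma hist_sumB phi1 phi2 H :
  hist_sum (fun H' o => phi1 H' o - phi2 H' o) H = hist_sum phi1 H - hist_sum phi2 H.
Proof.
elim/last_ind: H => [|H o IHH]; first by rewrite /hist_sum /= subr0.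
by rewrite !hist_sum_rcons IHH; ring.
Qed.

Lemma hist_expect_hist_sum phi n H :
  hist_expect n H (hist_sum phi)
  = hist_sum phi H + \sum_(k < n) hist_expect k H (fun H' => step_expect H' (phi H')).
Proof.
elim: n H => [|n IHn] H /=; first by rewrite big_ord0 addr0.
have step o : hist_expect n (rcons H o) (hist_sum phi) = hist_sum phi H + phi H o
    + \sum_(k < n) hist_expect k (rcons H o) (fun H' => step_expect H' (phi H')).
  by rewrite IHn hist_sum_rcons.
rewrite (eq_step_expect H step) !step_expectD step_expect_cst step_expect_sumr.
by rewrite big_ord_recl addrA.
Qed.

Definition mean_reward (H : history) : R := \sum_(a < K) p H a * g (size H) a.

Lemma hist_sum_reward (o0 : outcome K b) H :
  hist_sum (fun H' o => g (size H') o.1) H = \sum_(t < size H) g t (nth o0 H t).1.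
Proof.
elim/last_ind: H => [|H o IHH]; first by rewrite big_ord0.
rewrite hist_sum_rcons IHH size_rcons big_ord_recr /= nth_rcons ltnn eqxx.
by congr (_ + _); apply: eq_bigr => t _; rewrite nth_rcons ltn_ord.
Qed.

Lemma expected_reward_expect T :
  expected_reward eta delta g q T = \sum_(k < T) hist_expect k [::] mean_reward.
Proof.
pose o0 : outcome K b := (Ordinal K_gt0, [ffun => Ordinal K_gt0]).
rewrite /expected_reward (eq_bigr (fun h : T.-tuple (outcome K b) =>
  hist_prob_aux eta delta g q [::] h * hist_sum (fun H o => g (size H) o.1) ([::] ++ h))).
  rewrite sum_hist_prob_expect hist_expect_hist_sum add0r.
  apply: eq_bigr => k _; apply: eq_hist_expect => H _.
  exact: step_expect_agent (fun a => g (size H) a).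
move=> h _; rewrite (hist_sum_reward o0) size_tuple; congr (_ * _).
by apply: eq_bigr => t _; rewrite (tnth_nth o0).
Qed.

Lemma hist_prob_aux_ge0 pre h : 0 <= hist_prob_aux eta delta g q pre h.
Proof.
elim: h pre => [|o h IHh] pre //=.
by rewrite mulr_ge0 // -/(step_prob pre o) step_prob_ge0.
Qed.

Local Notation pp H := (pprime (p H) (q H)).

Lemma step_prob_unselected H j :
  step_expect H (fun o => ((o.1 != j) && [forall i, o.2 i != j])%:R)
  = (1 - p H j) * \prod_(i < b) (1 - q H i j).
Proof.
rewrite /step_expect /step_prob -(pair_big xpredT xpredT (fun a (s : {ffun 'I_b -> 'I_K}) =>
  p H a * \prod_(i < b) q H i (s i) * ((a != j) && [forall i, s i != j])%:R)) /=.
transitivity (\sum_(a < K) p H a * (a != j)%:R *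
    \sum_(s : {ffun 'I_b -> 'I_K}) \prod_(i < b) (q H i (s i) * (s i != j)%:R)).
  apply: eq_bigr => a _; rewrite big_distrr /=; apply: eq_bigr => s _.
  by rewrite prodr_mul_indicator -mulnb natrM; ring.
rewrite -big_distrl /= sumr_mul_neq sum_expn_p.
rewrite -(bigA_distr_bigA (fun i k => q H i k * (k != j)%:R)) /=; congr (_ * _).
by apply: eq_bigr => i _; rewrite sumr_mul_neq sum_q.
Qed.

Lemma step_expect_selected H j x :
  step_expect H (fun o => if selected o j then x else 0) = pp H j * x.
Proof.
have sel_indicator (o : outcome K b) : (if selected o j then x else 0)
    = x - x * ((o.1 != j) && [forall i, o.2 i != j])%:R.
  have -> : (o.1 != j) && [forall i, o.2 i != j] = ~~ selected o j.
    by rewrite /selected negb_or negb_exists.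
  by case: selected; rewrite /= ?mulr0 ?subr0 ?mulr1 ?subrr.
rewrite (eq_step_expect H sel_indicator) step_expectB step_expectZ.
by rewrite step_expect_cst step_prob_unselected /pprime; ring.
Qed.

Definition gain_est (j : 'I_K) (H : history) (o : outcome K b) : R :=
  ghat (g (size H)) (p H) (q H) o j.

Lemma step_expect_gain_est H j : pp H j != 0 ->
  step_expect H (gain_est j H) = g (size H) j.
Proof. by move=> pp_neq0; rewrite step_expect_selected mulrCA divff ?mulr1. Qed.

Lemma step_expect_gain_est_sqr H j : pp H j != 0 ->
  step_expect H (fun o => gain_est j H o ^+ 2) = g (size H) j ^+ 2 / pp H j.
Proof.
move=> pp_neq0.
rewrite (eq_step_expect H (f2 := fun o =>
  if selected o j then (g (size H) j / pp H j) ^+ 2 else 0)).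
  by rewrite step_expect_selected; field.
by move=> o; rewrite /gain_est /ghat; case: selected; rewrite // expr2 mulr0.
Qed.

Lemma expn_weights_aux_rcons pre w0 h o j :
  expn_weights_aux eta delta g q pre w0 (rcons h o) j =
  expn_weights_aux eta delta g q pre w0 h j *
  expR (delta * ghat (g (size (pre ++ h)))
    (expn_dist eta (expn_weights_aux eta delta g q pre w0 h)) (q (pre ++ h)) o j).
Proof.
elim: h pre w0 => [|o' h IHh] pre w0 /=; first by rewrite cats0.
by rewrite IHh cat_rcons.
Qed.

Lemma expn_weights_rcons H o j :
  w (rcons H o) j = w H j * expR (delta * gain_est j H o).
Proof. exact: expn_weights_aux_rcons. Qed.

Lemma ln_expn_weights H j :
  ln (w H j) = hist_sum (fun H' o => delta * gain_est j H' o) H.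
Proof.
elim/last_ind: H => [|H o IHH]; first by rewrite /expn_weights /= ln1.
rewrite expn_weights_rcons lnM ?posrE ?expn_weights_gt0 ?expR_gt0 //.
by rewrite expRK IHH hist_sum_rcons.
Qed.

Definition total_weight (H : history) : R := \sum_(j < K) w H j.

Lemma total_weight_nil : total_weight [::] = K%:R.
Proof. by rewrite /total_weight /expn_weights /= sumr_const card_ord. Qed.

Lemma expn_weights_le H j : eta < 1 ->
  w H j <= total_weight H * (p H j / (1 - eta)).
Proof.
move=> eta_lt1; have W_gt0 := sum_expn_weights_gt0 H.
have p_ge : (1 - eta) * (w H j / total_weight H) <= p H j.
  by rewrite /expn_p /expn_dist lerDl divr_ge0 ?ler0n ?(andP eta01).1.
by rewrite -ler_pdivrMl // ler_pdivlMr ?subr_gt0 // mulrC (mulrC _ (w H j)).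
Qed.

Definition log_total_weight_step_ub (H : history) (o : outcome K b) : R :=
  \sum_(j < K) p H j / (1 - eta) *
    (delta * gain_est j H o + 2 * (delta * gain_est j H o) ^+ 2).

Lemma ln_total_weight_rcons_le H o : eta < 1 ->
  (forall j, 0 <= delta * gain_est j H o <= 1 / 2) ->
  ln (total_weight (rcons H o)) <= ln (total_weight H) + log_total_weight_step_ub H o.
Proof.
move=> eta_lt1 x_small.
set W := total_weight H; set U := log_total_weight_step_ub H o.
have W_gt0 : 0 < W := sum_expn_weights_gt0 H.
suff W1_le : total_weight (rcons H o) <= W * (1 + U).
  rewrite -[U]expRK -lnM ?posrE ?expR_gt0 // ler_ln ?posrE ?mulr_gt0 ?expR_gt0 //.
    by apply: le_trans W1_le (ler_wpM2l (ltW W_gt0) (expR_ge1Dx U)).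
  exact: sum_expn_weights_gt0.
rewrite /total_weight mulrDr mulr1 mulr_sumr -big_split /=.
apply: ler_sum => j _; rewrite expn_weights_rcons.
set x := delta * gain_est j H o.
have [x_ge0 _] := andP (x_small j).
apply: (@le_trans _ _ (w H j * (1 + x + 2 * x ^+ 2))).
  by apply: ler_wpM2l; [exact/ltW/expn_weights_gt0 | exact: expR_le_quadratic (x_small j)].
rewrite -addrA mulrDr mulr1 lerD2l mulrA.
apply: ler_wpM2r; last exact: expn_weights_le.
by rewrite addr_ge0 // mulr_ge0 ?sqr_ge0.
Qed.

Hypothesis g01 : forall t j, 0 <= g t j <= 1.

Lemma regret_le_horizon T jstar : regret eta delta g q T jstar <= T%:R.
Proof.
have reward_ge0 : 0 <= expected_reward eta delta g q T.
  rewrite sumr_ge0 // => h _; rewrite mulr_ge0 ?hist_prob_aux_ge0 // sumr_ge0 // => t _.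
  by case/andP: (g01 t (tnth h t).1).
have : \sum_(t < T) g t jstar <= \sum_(t < T) 1.
  by apply: ler_sum => t _; case/andP: (g01 t jstar).
by rewrite sumr_const card_ord /regret; lra.
Qed.

Lemma regret_single_arm T jstar : (K <= 1)%N -> regret eta delta g q T jstar = 0.
Proof.
move=> K_le1; have arm_eq (a : 'I_K) : a = jstar.
  have val0 (c : 'I_K) : val c = 0%N.
    by apply/eqP; rewrite -leqn0 -ltnS (leq_trans (ltn_ord c)).
  by apply: val_inj; rewrite !val0.
rewrite /regret expected_reward_expect; apply/eqP; rewrite subr_eq0; apply/eqP.
apply: eq_bigr => k _; rewrite -(hist_expect_cst k [::] (g k jstar)).
apply: eq_hist_expect => H /= sizeH; rewrite /mean_reward sizeH.
rewrite (eq_bigr (fun a => p H a * g k jstar)) => [|a _].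
  by rewrite -mulr_suml sum_expn_p mul1r.
by rewrite -[in RHS](arm_eq a).
Qed.


Section RegretBound.
Variables (Theta : R) (jstar : 'I_K).
Hypothesis eta_lt1 : eta < 1.
Hypothesis delta_gt0 : 0 < delta.
Hypothesis Theta01 : 0 <= Theta <= 1.
Hypothesis prod_q_le : forall H j, \prod_(i < b) (1 - q H i j) <= Theta.
Hypothesis delta_small : 2 * delta <= 1 - Theta + Theta * (eta / K%:R).

Local Notation B := (1 - (1 - K%:R^-1) * Theta)^-1.

Lemma affine_expn_p_ge H j : 2 * delta <= 1 - Theta + Theta * p H j.
Proof.
apply: le_trans delta_small _.
by rewrite lerD2l ler_wpM2l ?(andP Theta01).1 ?expn_p_ge.
Qed.

Lemma pprime_ge H j : 1 - Theta + Theta * p H j <= pp H j.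
Proof.
have -> : 1 - Theta + Theta * p H j = 1 - (1 - p H j) * Theta by ring.
by rewrite lerD2l lerN2 ler_wpM2l ?subr_ge0 ?expn_p_le1.
Qed.

Lemma pprime_gt0 H j : 0 < pp H j.
Proof.
apply: lt_le_trans (le_trans (affine_expn_p_ge H j) (pprime_ge H j)).
by rewrite mulr_gt0.
Qed.

Lemma log_weight_step_small H o j : 0 <= delta * gain_est j H o <= 1 / 2.
Proof.
rewrite /gain_est /ghat; case: selected; last by rewrite mulr0 lexx /=; lra.
have [g_ge0 g_le1] := andP (g01 (size H) j).
have pp_ge := le_trans (affine_expn_p_ge H j) (pprime_ge H j).
have pp_gt0 := pprime_gt0 H j.
have dg_le : delta * g (size H) j <= delta := ler_piMr (ltW delta_gt0) g_le1.
rewrite mulrA divr_ge0 ?mulr_ge0 ?(ltW delta_gt0) ?(ltW pp_gt0) //= ler_pdivrMr //; lra.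
Qed.

Lemma ln_total_weight_le H :
  ln (total_weight H) <= ln K%:R + hist_sum log_total_weight_step_ub H.
Proof.
elim/last_ind: H => [|H o IHH]; first by rewrite total_weight_nil /hist_sum /= addr0.
apply: le_trans (ln_total_weight_rcons_le eta_lt1 (log_weight_step_small H o)) _.
by rewrite hist_sum_rcons addrA lerD2r.
Qed.

Lemma hist_sum_gain_le H :
  hist_sum (fun H' o => delta * gain_est jstar H' o - log_total_weight_step_ub H' o) H
  <= ln K%:R.
Proof.
have w_le_W : ln (w H jstar) <= ln (total_weight H).
  rewrite ler_ln ?posrE ?expn_weights_gt0 ?sum_expn_weights_gt0 //.
  rewrite /total_weight (bigD1 jstar) //= lerDl sumr_ge0 // => j _.
  exact/ltW/expn_weights_gt0.
rewrite hist_sumB -ln_expn_weights; have := ln_total_weight_le H; lra.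
Qed.

Lemma sum_sqr_gain_div_pprime_le H :
  \sum_(j < K) p H j * g (size H) j ^+ 2 / pp H j <= B.
Proof.
have D_gt0 j : 0 < 1 - Theta + Theta * p H j.
  by apply: lt_le_trans (affine_expn_p_ge H j); rewrite mulr_gt0.
apply: le_trans (sum_div_affine_le K_gt0 Theta01 (sum_expn_p H) D_gt0).
apply: ler_sum => j _; rewrite -mulrA ler_wpM2l ?expn_p_ge0 //.
have [g_ge0 g_le1] := andP (g01 (size H) j).
apply: (@le_trans _ _ (1 / pp H j)).
  by rewrite ler_wpM2r ?invr_ge0 ?(ltW (pprime_gt0 H j)) // expr_le1.
by rewrite mul1r lef_pV2 ?posrE ?pprime_gt0 ?pprime_ge.
Qed.

Lemma step_expect_log_total_weight_step_ub H :
  step_expect H (log_total_weight_step_ub H)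
  <= delta / (1 - eta) * mean_reward H + 2 * delta ^+ 2 / (1 - eta) * B.
Proof.
have pp_neq0 j := lt0r_neq0 (pprime_gt0 H j).
rewrite /log_total_weight_step_ub step_expect_sumr (eq_bigr (fun j =>
  delta / (1 - eta) * (p H j * g (size H) j)
  + 2 * delta ^+ 2 / (1 - eta) * (p H j * g (size H) j ^+ 2 / pp H j))); last first.
  move=> j _; rewrite (eq_step_expect H (f2 := fun o => p H j / (1 - eta) *
    (delta * gain_est j H o + 2 * delta ^+ 2 * gain_est j H o ^+ 2))).
    rewrite step_expectZ step_expectD !step_expectZ step_expect_gain_est //.
    by rewrite step_expect_gain_est_sqr //; field; rewrite pp_neq0 subr_eq0 gt_eqF.
  by move=> o; rewrite exprMn mulrA.
rewrite big_split /= -!mulr_sumr lerD2l ler_wpM2l ?sum_sqr_gain_div_pprime_le //.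
by rewrite divr_ge0 ?mulr_ge0 ?sqr_ge0 ?(ltW delta_gt0) // subr_ge0 (ltW eta_lt1).
Qed.

Lemma expected_gain_le T :
  delta * \sum_(t < T) g t jstar
  - delta / (1 - eta) * expected_reward eta delta g q T
  - 2 * delta ^+ 2 / (1 - eta) * B * T%:R <= ln K%:R.
Proof.
set psi := fun H o => delta * gain_est jstar H o - log_total_weight_step_ub H o.
have : hist_expect T [::] (hist_sum psi) <= ln K%:R.
  rewrite -(hist_expect_cst T [::] (ln K%:R)) ler_hist_expect // => H _.
  exact: hist_sum_gain_le.
rewrite hist_expect_hist_sum /hist_sum /= add0r; apply: le_trans.
set c := 2 * delta ^+ 2 / (1 - eta) * B.
have -> : c * T%:R = \sum_(k < T) c by rewrite sumr_const card_ord mulr_natr.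
rewrite expected_reward_expect !mulr_sumr -!sumrB; apply: ler_sum => k _.
have -> : delta * g k jstar - delta / (1 - eta) * hist_expect k [::] mean_reward - c
    = hist_expect k [::] (fun H => delta * g k jstar - c
                                   + - (delta / (1 - eta)) * mean_reward H).
  by rewrite hist_expectD hist_expect_cst hist_expectZ; ring.
apply: ler_hist_expect => H /= sizeH.
rewrite /psi step_expectB step_expectZ step_expect_gain_est ?lt0r_neq0 ?pprime_gt0 //.
rewrite sizeH; have := step_expect_log_total_weight_step_ub H; rewrite /c; lra.
Qed.

Lemma regret_le T :
  regret eta delta g q T jstar
  <= eta * T%:R + ln K%:R / delta + 2 * delta * B * T%:R.
Proof.
have := expected_gain_le T; rewrite /regret.
set G := \sum_(t < T) g t jstar; set E := expected_reward _ _ _ _ _.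
move: B => Bv gain_le.
have G_le : G <= T%:R.
  have : G <= \sum_(t < T) 1 by apply: ler_sum => t _; case/andP: (g01 t jstar).
  by rewrite sumr_const card_ord.
have L_ge0 : 0 <= ln K%:R :> R by rewrite ln_ge0 // ler1n.
have r_gt0 : 0 < (1 - eta) / delta by rewrite divr_gt0 ?subr_gt0.
have := ler_wpM2l (ltW r_gt0) gain_le.
have -> : (1 - eta) / delta * (delta * G - delta / (1 - eta) * E
    - 2 * delta ^+ 2 / (1 - eta) * Bv * T%:R) = (1 - eta) * G - E - 2 * delta * Bv * T%:R.
  by field; rewrite !gt_eqF ?subr_gt0.
have : (1 - eta) / delta * ln K%:R <= ln K%:R / delta.
  by rewrite mulrAC ler_wpM2r ?invr_ge0 ?(ltW delta_gt0) // ler_piMl // gerBl (andP eta01).1.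
have : eta * G <= eta * T%:R by rewrite ler_wpM2l ?(andP eta01).1.
nra.
Qed.

End RegretBound.
End ExpnProcess.

Section Tuning.
Variable R : realType.

Lemma Theta_of_in01 (K b : nat) (eps : 'I_b -> R) : (0 < K)%N ->
  (forall i, 0 < eps i <= 1) -> 0 <= Theta_of K eps <= 1.
Proof.
move=> K_gt0 eps01; have K_ge1 : 1 <= K%:R :> R by rewrite ler1n.
have factor01 i : 0 <= 1 - eps i / K%:R <= 1.
  have [eps_gt0 eps_le1] := andP (eps01 i).
  have : eps i / K%:R <= 1 by rewrite ler_pdivrMr ?ltr0n // mul1r (le_trans eps_le1).
  have : 0 <= eps i / K%:R by rewrite divr_ge0 ?ler0n ?(ltW eps_gt0).
  by move=> ? ?; apply/andP; split; lra.
by rewrite prodr_ge0 ?prodr_ile1 // => i _; case/andP: (factor01 i).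
Qed.

Lemma prod_subr_le_Theta_of (K b : nat) (eps x : 'I_b -> R) :
  (forall i, eps i / K%:R <= x i <= 1) -> \prod_(i < b) (1 - x i) <= Theta_of K eps.
Proof.
move=> x_bounds; apply: ler_prod => i _; have [x_ge x_le1] := andP (x_bounds i).
by rewrite subr_ge0 x_le1 lerD2l lerN2.
Qed.

Lemma mixture_gt0 (K : nat) (Theta : R) : (0 < K)%N -> 0 <= Theta <= 1 ->
  0 < 1 - (1 - K%:R^-1) * Theta.
Proof.
move=> K_gt0 /andP[Th_ge0 Th_le1]; have Ki_gt0 : 0 < K%:R^-1 :> R by rewrite invr_gt0 ltr0n.
have : K%:R^-1 * Theta <= K%:R^-1 := ler_piMr (ltW Ki_gt0) Th_le1.
have : 0 <= K%:R^-1 * Theta by rewrite mulr_ge0 ?(ltW Ki_gt0).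
move=> ? ?; nra.
Qed.

Lemma beta_of_gt0 (K : nat) (Theta : R) : (0 < K)%N -> 0 <= Theta <= 1 ->
  0 < beta_of K Theta.
Proof. by move=> K_gt0 Theta01; rewrite addr_gt0 ?invr_gt0 ?mixture_gt0. Qed.

Lemma mul_mixture_le (K : nat) (Theta eta : R) : 0 <= Theta <= 1 -> eta <= 1 ->
  eta * (1 - (1 - K%:R^-1) * Theta) <= 1 - Theta + Theta * (eta / K%:R).
Proof.
move=> /andP[Th_ge0 Th_le1] eta_le1; rewrite -subr_ge0.
have -> : 1 - Theta + Theta * (eta / K%:R) - eta * (1 - (1 - K%:R^-1) * Theta)
    = (1 - eta) * (1 - Theta) by ring.
by rewrite mulr_ge0 ?subr_ge0.
Qed.

Definition expn_delta (Theta : R) (K T : nat) : R :=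
  let d := Num.sqrt (ln K%:R / (beta_of K Theta * T%:R)) in
  if 0 < d then d else 1.

Definition expn_eta (Theta : R) (K T : nat) : R :=
  let e := 4 * expn_delta Theta K T * beta_of K Theta in
  if (0 <= e) && (e < 1 / 2) then e else 0.

Lemma expn_delta_gt0 Theta K T : 0 < expn_delta Theta K T.
Proof. by rewrite /expn_delta; case: ifP. Qed.

Lemma expn_eta_in01 Theta K T : 0 <= expn_eta Theta K T <= 1.
Proof.
rewrite /expn_eta; case: ifP => [/andP[e_ge0 e_lt]|_]; last by rewrite lexx ler01.
by rewrite e_ge0 /=; lra.
Qed.

Lemma expn_delta_balance (K T : nat) (Theta : R) :
  (1 < K)%N -> (0 < T)%N -> 0 <= Theta <= 1 ->
  expn_delta Theta K T * (beta_of K Theta * T%:R)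
    = Num.sqrt (beta_of K Theta * T%:R * ln K%:R)
  /\ ln K%:R / expn_delta Theta K T = Num.sqrt (beta_of K Theta * T%:R * ln K%:R).
Proof.
move=> K_gt1 T_gt0 Theta01.
have L_gt0 : 0 < ln K%:R :> R by rewrite ln_gt0 // ltr1n.
have betaT_gt0 : 0 < beta_of K Theta * T%:R.
  by rewrite mulr_gt0 ?ltr0n ?beta_of_gt0 // ltnW.
have d_gt0 : 0 < Num.sqrt (ln K%:R / (beta_of K Theta * T%:R)).
  by rewrite sqrtr_gt0 divr_gt0.
rewrite /expn_delta /= d_gt0 mul_sqrt_div ?div_sqrt_div ?(ltW L_gt0) //.
by rewrite mulrC.
Qed.

Lemma regret_expn_tuned (K T b : nat) (Theta : R) (g : nat -> 'I_K -> R)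
    (q : seq (outcome K b) -> 'I_b -> 'I_K -> R) (jstar : 'I_K) :
  (1 < K)%N -> (0 < T)%N -> 0 <= Theta <= 1 ->
  (forall t j, 0 <= g t j <= 1) -> (forall H i j, 0 <= q H i j) ->
  (forall H i, \sum_(j < K) q H i j = 1) ->
  (forall H j, \prod_(i < b) (1 - q H i j) <= Theta) ->
  regret (expn_eta Theta K T) (expn_delta Theta K T) g q T jstar
  <= 8 * Num.sqrt (beta_of K Theta * T%:R * ln K%:R).
Proof.
move=> K_gt1 T_gt0 Theta01 g01 q_ge0 sum_q prod_q_le.
have K_gt0 : (0 < K)%N by apply: ltnW.
have [dbetaT L_div_d] := expn_delta_balance K_gt1 T_gt0 Theta01.
move: dbetaT L_div_d; rewrite /expn_eta.
set m := 1 - (1 - K%:R^-1) * Theta; set beta := beta_of K Theta.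
set d := expn_delta Theta K T; set S := Num.sqrt _ => dbetaT L_div_d.
have m_gt0 : 0 < m := mixture_gt0 K_gt0 Theta01.
have beta_m : beta * m = 1 + m by rewrite /beta /beta_of -/m mulrDl mulVf ?gt_eqF // mul1r.
have m_inv_le : m^-1 <= beta by rewrite /beta /beta_of -/m lerDl.
have beta_gt0 : 0 < beta := beta_of_gt0 K_gt0 Theta01.
have d_gt0 : 0 < d := expn_delta_gt0 Theta K T.
have S_ge0 : 0 <= S := sqrtr_ge0 _.
rewrite !mulr_ge0 ?ler0n ?(ltW d_gt0) ?(ltW beta_gt0) //=.
case: ifP => [e_lt | /negbT]; last first.
  rewrite -leNgt => e_ge; have eta0_01 : 0 <= (0 : R) <= 1 by rewrite lexx ler01.
  apply: le_trans (regret_le_horizon _ K_gt0 eta0_01 q_ge0 g01 T jstar) _.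
  have -> : 8 * S = 2 * (4 * d * beta) * T%:R by rewrite -dbetaT; ring.
  by rewrite -[X in X <= _]mul1r ler_wpM2r ?ler0n //; lra.
have eta01 : 0 <= 4 * d * beta <= 1.
  by rewrite !mulr_ge0 ?ler0n ?(ltW d_gt0) ?(ltW beta_gt0) //=; lra.
have delta_small : 2 * d <= 1 - Theta + Theta * (4 * d * beta / K%:R).
  apply: le_trans (mul_mixture_le K Theta01 (andP eta01).2).
  by rewrite -/m -[4 * d * beta * m]mulrA beta_m; nra.
have eta_lt1 : 4 * d * beta < 1 by lra.
apply: le_trans (regret_le K_gt0 eta01 q_ge0 sum_q g01 jstar eta_lt1 d_gt0 Theta01
  prod_q_le delta_small T) _.
rewrite -/m L_div_d.
have : 2 * d * m^-1 * T%:R <= 2 * S.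
  have -> : 2 * S = 2 * d * beta * T%:R by rewrite -dbetaT; ring.
  by rewrite ler_wpM2r ?ler0n // ler_wpM2l // mulr_ge0 ?ler0n ?(ltW d_gt0).
have -> : 4 * d * beta * T%:R = 4 * S by rewrite -dbetaT; ring.
lra.
Qed.

End Tuning.

Theorem mainTheorem3 (R : realType) :
  exists C : R, 0 < C /\
  exists eta_of delta_of : R -> nat -> nat -> R,
  forall (K T b : nat) (eps : 'I_b -> R)
         (g : nat -> 'I_K -> R) (q : seq (outcome K b) -> 'I_b -> 'I_K -> R),
    (0 < K)%N ->
    (forall i, 0 < eps i <= 1) ->
    (forall t j, 0 <= g t j <= 1) ->
    (forall h i, \sum_(j < K) q h i j = 1) ->
    (forall h i j, eps i / K%:R <= q h i j) ->
    let Theta := Theta_of K eps in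
    let beta := beta_of K Theta in
    let eta := eta_of Theta K T in
    let delta := delta_of Theta K T in
    0 <= eta <= 1 /\ 0 < delta /\
    forall jstar : 'I_K,
      (forall j : 'I_K, \sum_(t < T) g t j <= \sum_(t < T) g t jstar) ->
      regret eta delta g q T jstar
        <= C * Num.sqrt (beta * T%:R * ln K%:R).
Proof.
exists 8; split => //; exists (@expn_eta R), (@expn_delta R).
move=> K T b eps g q K_gt0 eps01 g01 sum_q q_ge Theta beta eta delta.
split; first exact: expn_eta_in01.
split; first exact: expn_delta_gt0.
move=> jstar _.
have q_ge0 H i j : 0 <= q H i j.
  by apply: le_trans (q_ge H i j); rewrite divr_ge0 ?ler0n ?(ltW (andP (eps01 i)).1).
have Theta01 : 0 <= Theta <= 1 := Theta_of_in01 K_gt0 eps01.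
have prod_q_le H j : \prod_(i < b) (1 - q H i j) <= Theta.
  by apply: prod_subr_le_Theta_of => i; rewrite q_ge q_le1.
have eta01 : 0 <= eta <= 1 := expn_eta_in01 Theta K T.
have [T0 | T_gt0] := posnP T.
  apply: le_trans (regret_le_horizon _ K_gt0 eta01 q_ge0 g01 T jstar) _.
  by rewrite T0 mulr_ge0 ?sqrtr_ge0.
have [K_le1 | K_gt1] := leqP K 1.
  by rewrite (regret_single_arm _ _ K_gt0 eta01 q_ge0 sum_q T jstar K_le1) mulr_ge0 ?sqrtr_ge0.
exact: regret_expn_tuned.
Qed.
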